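(* Let $\mu>0$ and let $U(a,y)$ denote the parabolic cylinder function (the standard solution of $w''(y)=(\tfrac14 y^2+a)w(y)$ with $U(a,y)\sim y^{-a-1/2}\mathrm{e}^{-y^2/4}$ as $y\to+\infty$). Define, for $\xi\in\mathbb{C}$ away from the zeros of the denominator, $$\Phi_0(\xi)=\frac{1}{2\sqrt{2\mu}}\,\frac{U\!\left(\tfrac12-\tfrac{\mathrm{i}}{4\mu},\,\tfrac{\mathrm{i}\xi}{\sqrt{2\mu}}\right)}{U\!\left(-\tfrac12-\tfrac{\mathrm{i}}{4\mu},\,\tfrac{\mathrm{i}\xi}{\sqrt{2\mu}}\right)}.$$ Then $\Phi_0$ solves the Riccati equation $$\Phi_0(\xi)^2-\xi\,\Phi_0(\xi)=2\mu\,\Phi_0'(\xi)+\frac{\mathrm{i}}{2},$$ (and hence also the second-order equation $-\tfrac12\Phi_0-\tfrac12\xi\Phi_0'+\Phi_0\Phi_0'=\mu\Phi_0''$), and satisfies $\Phi_0(\xi)\sim-\dfrac{\mathrm{i}}{2\xi}$ as $\xi\to-\mathrm{i}\infty$ along the negative imaginary axis.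
   Context: This function is the leading-order inner solution of Burgers' equation $u_t+uu_x=\mu u_{xx}$ with initial data $u(x,0)=1/(1+x^2)$ near $z=\mathrm{i}$ in the small-time limit, with inner variable $\xi=(z-\mathrm{i})/t^{1/2}$ and $u\sim t^{-1/2}\Phi_0(\xi)$. The principal branch conventions for $U$ are the standard ones (as in the NIST Digital Library of Mathematical Functions, Chapter 12). *)

From Stdlib Require Import Reals.
From Coquelicot Require Import Coquelicot.
Open Scope C_scope.

Definition cexp (z : C) : C :=
  (exp (Re z) * cos (Im z), exp (Re z) * sin (Im z))%R.

Definition rpowC (x : R) (s : C) : C := cexp (s * RtoC (ln x)).

Definition is_PCF_U (a : C) (f : C -> C) : Prop :=
  exists f' : C -> C,
    (forall y : C, is_derive f y (f' y)) /\
    (forall y : C, is_derive f' y ((y * y / 4 + a) * f y)) /\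
    filterlim
      (fun x : R => f (RtoC x) /
         (rpowC x (- a - 1/2) * RtoC (exp (- (x * x) / 4))))
      (Rbar_locally p_infty) (locally (RtoC 1)).

(* The inner solution Phi_0, given U(a1,.) = U1, U(a2,.) = U2 with
   a1 = 1/2 - i/(4 mu), a2 = -1/2 - i/(4 mu). *)
Definition Phi0 (mu : R) (U1 U2 : C -> C) (xi : C) : C :=
  / (2 * RtoC (sqrt (2 * mu))) *
  (U1 (Ci * xi / RtoC (sqrt (2 * mu))) / U2 (Ci * xi / RtoC (sqrt (2 * mu)))).

Definition Phi0_den (mu : R) (U2 : C -> C) (xi : C) : C :=
  U2 (Ci * xi / RtoC (sqrt (2 * mu))).

(* Write U_b for U(b, .) and a = 1/2 - i/(4 mu).  Each U_b solves Weber's equation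
   w'' = (y^2/4 + b) w, and y/2 U_a - U_a' solves it with parameter a - 1.  For a solution
   decaying like e^(-y^2/4) on the positive real axis, a comparison argument shows that
   U' + y/2 U is smaller by a factor 1/y.  Hence the constant Wronskian of
   F = y/2 U_a - U_a' - U_(a-1) and U_(a-1) tends to 0, so F is a multiple of U_(a-1); as
   F = o(U_(a-1)) at +oo, F = 0.  This is the recurrence U(a-1, y) = y/2 U(a, y) - U'(a, y),
   and it makes r = U_a / U_(a-1) satisfy r' = y r - 1 - (1/2 - a) r^2.  The function
   Phi_0(xi) = r(i xi / sqrt(2 mu)) / (2 sqrt(2 mu)) is a rescaling of r turning this into the
   stated Riccati equation.  Finally the leading term of U_(a-1) is y times that of U_a, so
   Phi_0(-i t) ~ 1/(2t). *)

From Stdlib Require Import Reals Lra Psatz.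
From Coquelicot Require Import Coquelicot.
Open Scope C_scope.

(** * Complex differentiation *)

(* Coquelicot's product and chain rules view [C] as the normed module
   [AbsRing_NormedModule C_AbsRing], while [is_derive] on [C -> C] elaborates to
   [C_NormedModule]; the two notions of derivative agree. *)
Lemma is_derive_C_abs (f : C -> C) (z l : C) :
  @is_derive C_AbsRing (AbsRing_NormedModule C_AbsRing) f z l <-> is_derive f z l.
Proof.
  split; intros [_ H]; split; try apply is_linear_scal_l; intros x Hx eps; exact (H x Hx eps).
Qed.

Lemma is_derive_C_eps (f : C -> C) (z l : C) :
  is_derive f z l <->
  forall eps : R, (0 < eps)%R -> exists d : R, (0 < d)%R /\
    forall w, (Cmod (w - z) < d)%R -> (Cmod (f w - f z - (w - z) * l) <= eps * Cmod (w - z))%R.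
Proof.
  split.
  - intros [_ H] eps Heps.
    destruct (H z (fun P HP => HP) (mkposreal eps Heps)) as [d Hd].
    exists d; split; [apply cond_pos | exact Hd].
  - intros H; split; [apply is_linear_scal_l |].
    intros x Hx eps.
    apply (@is_filter_lim_locally_unique C_AbsRing (AbsRing_NormedModule C_AbsRing)) in Hx; subst x.
    destruct (H eps (cond_pos eps)) as [d [Hd0 Hd]].
    exists (mkposreal d Hd0); exact Hd.
Qed.

Lemma is_derive_Ceq (f : C -> C) (z l l' : C) : is_derive f z l -> l = l' -> is_derive f z l'.
Proof. now intros H <-. Qed.

Lemma is_derive_Cid (z : C) : is_derive (fun w : C => w) z (RtoC 1).
Proof. apply is_derive_C_abs, (@is_derive_id C_AbsRing). Qed.

Lemma is_derive_Cmult (f g : C -> C) (z a b : C) :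
  is_derive f z a -> is_derive g z b -> is_derive (fun w => f w * g w) z (a * g z + f z * b).
Proof.
  intros Hf Hg; apply is_derive_C_abs in Hf, Hg; apply is_derive_C_abs.
  exact (is_derive_mult f g z a b Hf Hg Cmult_comm).
Qed.

Lemma is_derive_Cscal (f : C -> C) (z c l : C) :
  is_derive f z l -> is_derive (fun w => c * f w) z (c * l).
Proof.
  intros H; eapply is_derive_Ceq; [exact (is_derive_Cmult _ _ _ _ _ (is_derive_const c z) H)|].
  change (zero * f z + c * l = c * l). unfold zero; simpl. ring.
Qed.

Lemma is_derive_Caffine (b c z : C) : is_derive (fun w => b + c * w) z c.
Proof.
  eapply is_derive_Ceq; [exact (is_derive_plus _ _ z _ _ (is_derive_const b z)
                                   (is_derive_Cscal _ z c _ (is_derive_Cid z)))|].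
  change (zero + c * RtoC 1 = c); unfold zero; simpl; ring.
Qed.

Lemma is_derive_Chalf (y : C) : is_derive (fun w : C => w / 2) y (/ 2).
Proof.
  eapply is_derive_ext; [| exact (is_derive_Caffine 0 (/ 2) y)].
  intros w; change (0 + / 2 * w = w / 2); unfold Cdiv; ring.
Qed.

Lemma is_derive_Ccomp (f g : C -> C) (z a b : C) :
  is_derive f (g z) a -> is_derive g z b -> is_derive (fun w => f (g w)) z (b * a).
Proof. intros Hf Hg; apply is_derive_C_abs in Hg; exact (is_derive_comp f g z a b Hf Hg). Qed.

Lemma is_derive_Cinv_id (u : C) : u <> 0 -> is_derive Cinv u (- / (u * u)).
Proof.
  intros Hu; apply is_derive_C_eps; intros eps Heps.
  set (m := Cmod u); assert (Hm : (0 < m)%R) by exact (proj1 (Cmod_gt_0 u) Hu).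
  exists (Rmin (m / 2) (eps * (m * m * m) / 2)); split.
  { apply Rmin_pos; [lra|]. assert (0 < m * m * m)%R by (repeat apply Rmult_lt_0_compat; lra). nra. }
  intros w Hw.
  assert (Hw1 : (Cmod (w - u) < m / 2)%R) by (eapply Rlt_le_trans; [exact Hw | apply Rmin_l]).
  assert (Hw2 : (Cmod (w - u) < eps * (m * m * m) / 2)%R) by (eapply Rlt_le_trans; [exact Hw | apply Rmin_r]).
  (* the remainder is exactly (w - u)^2 / (u^2 w), and |w| >= |u| / 2 *)
  assert (Hwm : (m / 2 <= Cmod w)%R).
  { assert (H := Cmod_triangle (w - u) (- w)). rewrite Cmod_opp in H.
    replace (w - u + - w) with (- u) in H by ring. rewrite Cmod_opp in H. fold m in H. lra. }
  assert (Hw0 : w <> 0) by (intros ->; rewrite Cmod_0 in Hwm; lra).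
  replace (/ w - / u - (w - u) * - / (u * u)) with ((w - u) * (w - u) / (u * u * w)) by (field; auto).
  rewrite Cmod_div, !Cmod_mult by (repeat apply Cmult_neq_0; auto). fold m.
  apply Rle_div_l; [apply Rmult_lt_0_compat; nra|].
  assert (H0 := Cmod_ge_0 (w - u)).
  assert (H1 : (0 <= eps * Cmod (w - u) * (m * m))%R) by (apply Rmult_le_pos; nra).
  assert (H2 : (eps * Cmod (w - u) * (m * m) * (m / 2) <= eps * Cmod (w - u) * (m * m) * Cmod w)%R)
    by (apply Rmult_le_compat_l; lra).
  nra.
Qed.

Lemma is_derive_Cinv (g : C -> C) (z b : C) :
  is_derive g z b -> g z <> 0 -> is_derive (fun w => / g w) z (- b / (g z * g z)).
Proof.
  intros Hg Hz. eapply is_derive_Ceq; [exact (is_derive_Ccomp Cinv g z _ b (is_derive_Cinv_id _ Hz) Hg)|].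
  field; auto.
Qed.

(** * Real-variable calculus *)

Lemma is_derive_Req (f : R -> R) (x l l' : R) : is_derive f x l -> l = l' -> is_derive f x l'.
Proof. now intros H <-. Qed.

Lemma is_derive_Re_real (f : C -> C) (s : R) (l : C) :
  is_derive f (RtoC s) l -> is_derive (fun t : R => Re (f (RtoC t))) s (Re l).
Proof.
  rewrite is_derive_C_eps; intros H; split; [apply is_linear_scal_l|].
  intros x Hx eps; apply (@is_filter_lim_locally_unique R_AbsRing R_NormedModule) in Hx; subst x.
  destruct (H eps (cond_pos eps)) as [d [Hd0 Hd]]; exists (mkposreal d Hd0); intros t Ht.
  assert (Hts : Cmod (RtoC t - RtoC s) = Rabs (t - s)) by (rewrite <- RtoC_minus; apply Cmod_R).
  specialize (Hd (RtoC t)); rewrite Hts in Hd; specialize (Hd Ht).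
  eapply Rle_trans; [| exact Hd]. eapply Rle_trans; [| apply re_le_Cmod].
  right; unfold minus, plus, opp, scal; simpl; unfold norm, mult; simpl; unfold abs; simpl.
  unfold Re; f_equal; ring.
Qed.

Lemma is_derive_Im_real (f : C -> C) (s : R) (l : C) :
  is_derive f (RtoC s) l -> is_derive (fun t : R => Im (f (RtoC t))) s (Im l).
Proof.
  intros H; apply is_derive_Cscal with (c := - Ci) in H; apply is_derive_Re_real in H.
  eapply is_derive_ext; [| replace (Im l) with (Re (- Ci * l)) by (destruct l; simpl; ring); exact H].
  intros t; cbv beta; destruct (f (RtoC t)) as [u v]; simpl; ring.
Qed.

Lemma is_derive_Cmod_sqr_real (h : C -> C) (s : R) (l : C) :
  is_derive h (RtoC s) l ->
  is_derive (fun t : R => Cmod (h (RtoC t)) ^ 2)%R s (2 * Re (Cconj (h (RtoC s)) * l))%R.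
Proof.
  intros H.
  eapply is_derive_ext; [intros t; symmetry; apply Cmod2_alt|].
  replace (2 * Re (Cconj (h (RtoC s)) * l))%R
    with (INR 2 * Re l * Re (h (RtoC s)) ^ 1 + INR 2 * Im l * Im (h (RtoC s)) ^ 1)%R
    by (destruct (h (RtoC s)), l; simpl; ring).
  apply (is_derive_plus (fun t => Re (h (RtoC t)) ^ 2) (fun t => Im (h (RtoC t)) ^ 2))%R;
    apply is_derive_pow; [apply is_derive_Re_real | apply is_derive_Im_real]; exact H.
Qed.

Lemma le_of_is_derive_nonneg (f df : R -> R) (a b : R) :
  (a <= b)%R -> (forall t, (a <= t <= b)%R -> is_derive f t (df t)) ->
  (forall t, (a <= t <= b)%R -> (0 <= df t)%R) -> (f a <= f b)%R.
Proof.
  intros Hab Hd Hpos.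
  destruct (MVT_gen f a b df) as [c [Hc E]]; rewrite Rmin_left, Rmax_right in * by lra.
  - intros t Ht; apply Hd; lra.
  - intros t Ht; apply continuity_pt_filterlim, (ex_derive_continuous f t).
    exists (df t); apply Hd; lra.
  - assert (0 <= df c)%R by (apply Hpos; lra). nra.
Qed.

Lemma const_of_is_derive_zero (h : R -> R) :
  (forall t, is_derive h t 0%R) -> forall a b, h a = h b.
Proof.
  intros Hh.
  assert (Hle : forall a b, (a <= b)%R -> h a = h b).
  { intros a b Hab.
    assert (H1 := le_of_is_derive_nonneg h (fun _ => 0%R) a b Hab (fun t _ => Hh t) (fun _ _ => Rle_refl 0)).
    assert (H2 := le_of_is_derive_nonneg (fun t => - h t)%R (fun _ => (- 0)%R) a b Hab
                    (fun t _ => is_derive_opp h t 0%R (Hh t)) (fun _ _ => Req_le _ _ (eq_sym Ropp_0))).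
    lra. }
  intros a b; destruct (Rle_dec a b); [now apply Hle | symmetry; apply Hle; lra].
Qed.

Lemma const_real_of_is_derive_C_zero (W : C -> C) :
  (forall y, is_derive W y (RtoC 0)) -> forall x x0 : R, W (RtoC x) = W (RtoC x0).
Proof.
  intros HW x x0; apply injective_projections.
  - exact (const_of_is_derive_zero _ (fun t => is_derive_Re_real W t _ (HW (RtoC t))) x x0).
  - exact (const_of_is_derive_zero _ (fun t => is_derive_Im_real W t _ (HW (RtoC t))) x x0).
Qed.

Lemma gronwall_zero (E dE : R -> R) (M : R) :
  (forall t, (0 <= t <= 1)%R -> is_derive E t (dE t)) ->
  (forall t, (0 <= t <= 1)%R -> (dE t <= M * E t)%R) -> E 0%R = 0%R -> (E 1 <= 0)%R.
Proof.
  intros HE Hle HE0.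
  assert (Hmono : (- (exp (- M * 0) * E 0) <= - (exp (- M * 1) * E 1))%R).
  { apply (le_of_is_derive_nonneg (fun t => - (exp (- M * t) * E t))%R
             (fun t => exp (- M * t) * (M * E t - dE t))%R); [lra | intros t Ht ..].
    - assert (Hexp : is_derive (fun t => exp (- M * t)) t (- M * exp (- M * t))%R)
        by (auto_derive; [trivial | ring]).
      eapply is_derive_Req;
        [exact (is_derive_opp _ _ _ (is_derive_mult _ _ _ _ _ Hexp (HE t Ht) Rmult_comm)) |].
      unfold opp, plus, mult; simpl; ring.
    - apply Rmult_le_pos; [apply Rlt_le, exp_pos | specialize (Hle t Ht); lra]. }
  rewrite HE0 in Hmono. assert (Hexp := exp_pos (- M * 1)). nra.
Qed.

Lemma unbounded_of_is_derive_ge (u du : R -> R) (x0 delta B : R) :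
  (0 < delta)%R -> (forall y, (x0 <= y)%R -> is_derive u y (du y)) ->
  (forall y, (x0 <= y)%R -> (delta <= du y)%R) -> exists y, (x0 <= y)%R /\ (B < u y)%R.
Proof.
  intros Hd Hu Hdu.
  set (y := (x0 + (Rabs B + Rabs (u x0) + 1) / delta)%R).
  assert (Hstep : (0 <= (Rabs B + Rabs (u x0) + 1) / delta)%R)
    by (apply Rdiv_le_0_compat; [assert (H1 := Rabs_pos B); assert (H2 := Rabs_pos (u x0)); lra | lra]).
  exists y; split; [unfold y; lra|].
  assert (Hmono : (u x0 - delta * x0 <= u y - delta * y)%R).
  { apply (le_of_is_derive_nonneg (fun s => u s - delta * s)%R (fun s => du s - delta)%R);
      [unfold y; lra | intros s Hs ..].
    - eapply is_derive_Req; [apply (is_derive_minus u (fun s => delta * s)%R); [apply Hu; lra|] |].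
      + apply (is_derive_scal (fun s => s)), is_derive_id.
      + unfold minus, plus, opp, scal, one, mult; simpl; ring.
    - specialize (Hdu s ltac:(lra)); lra. }
  assert (Hy : (delta * (y - x0) = Rabs B + Rabs (u x0) + 1)%R) by (unfold y; field; lra).
  assert (H1 := Rle_abs B); assert (H2 := Rle_abs (- u x0)); rewrite Rabs_Ropp in H2; lra.
Qed.

(** * Linear second-order equations *)

Definition bounded_on_bounded (q : C -> C) : Prop :=
  forall r : R, exists Q : R, forall y, (Cmod y <= r)%R -> (Cmod (q y) <= Q)%R.

Definition ode2_solution (q f f' : C -> C) : Prop :=
  (forall y, is_derive f y (f' y)) /\ (forall y, is_derive f' y (q y * f y)).

Lemma ode2_solution_scal (q f f' : C -> C) (c : C) :
  ode2_solution q f f' -> ode2_solution q (fun y => c * f y) (fun y => c * f' y).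
Proof.
  intros [Hf Hf']; split; intros y; [now apply is_derive_Cscal|].
  eapply is_derive_Ceq; [exact (is_derive_Cscal _ y c _ (Hf' y))|]; ring.
Qed.

Lemma ode2_solution_sub (q f f' g g' : C -> C) :
  ode2_solution q f f' -> ode2_solution q g g' ->
  ode2_solution q (fun y => f y - g y) (fun y => f' y - g' y).
Proof.
  intros [Hf Hf'] [Hg Hg']; split; intros y; [exact (is_derive_minus _ _ y _ _ (Hf y) (Hg y))|].
  eapply is_derive_Ceq; [exact (is_derive_minus _ _ y _ _ (Hf' y) (Hg' y))|].
  change (q y * f y - q y * g y = q y * (f y - g y)); ring.
Qed.

Lemma ode2_wronskian_deriv (q f f' g g' : C -> C) :
  ode2_solution q f f' -> ode2_solution q g g' ->
  forall y, is_derive (fun y => f y * g' y - f' y * g y) y (RtoC 0).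
Proof.
  intros [Hf Hf'] [Hg Hg'] y.
  eapply is_derive_Ceq;
    [exact (is_derive_minus _ _ y _ _ (is_derive_Cmult _ _ y _ _ (Hf y) (Hg' y))
                                        (is_derive_Cmult _ _ y _ _ (Hf' y) (Hg y)))|].
  change (f' y * g' y + f y * (q y * g y) - (q y * f y * g y + f' y * g' y) = RtoC 0); ring.
Qed.

Lemma Re_Cconj_mult_le (a b : C) : (Re (Cconj a * b) <= Cmod a * Cmod b)%R.
Proof.
  rewrite <- (Cmod_conj a), <- Cmod_mult.
  eapply Rle_trans; [apply Rle_abs | apply re_le_Cmod].
Qed.

Lemma Re_energy_deriv_le (u v c d : C) (Q : R) : (Cmod c <= Q)%R ->
  (2 * Re (Cconj u * (d * v)) + 2 * Re (Cconj v * (d * (c * u)))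
   <= Cmod d * (1 + Q) * (Cmod u ^ 2 + Cmod v ^ 2))%R.
Proof.
  intros Hc.
  assert (B1 := Re_Cconj_mult_le u (d * v)); assert (B2 := Re_Cconj_mult_le v (d * (c * u))).
  rewrite !Cmod_mult in B1; rewrite !Cmod_mult in B2.
  assert (P1 := Cmod_ge_0 u); assert (P2 := Cmod_ge_0 v); assert (P3 := Cmod_ge_0 d);
    assert (P4 := Cmod_ge_0 c).
  assert (Huv : (2 * (Cmod u * Cmod v) <= Cmod u ^ 2 + Cmod v ^ 2)%R)
    by (assert (H := pow2_ge_0 (Cmod u - Cmod v)); nra).
  assert (Cmod d * (Cmod c * (Cmod u * Cmod v)) <= Cmod d * (Q * (Cmod u * Cmod v)))%R
    by (apply Rmult_le_compat_l; [lra | apply Rmult_le_compat_r; nra]).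
  assert (Cmod d * (1 + Q) * (2 * (Cmod u * Cmod v)) <= Cmod d * (1 + Q) * (Cmod u ^ 2 + Cmod v ^ 2))%R
    by (apply Rmult_le_compat_l; nra).
  lra.
Qed.

(* Energy method: [|f|^2 + |f'|^2] along the segment from [y0] to [y] vanishes at [y0]
   and grows at most exponentially. *)
Lemma ode2_solution_unique (q f f' : C -> C) (y0 : C) :
  bounded_on_bounded q ->
  ode2_solution q f f' -> f y0 = 0 -> f' y0 = 0 -> forall y, f y = 0.
Proof.
  intros Hq [Hf Hf'] H0 H0' y.
  set (d := y - y0); set (z := fun w : C => y0 + d * w).
  destruct (Hq (Cmod y0 + Cmod d)%R) as [Q HQ].
  set (E := fun t : R => (Cmod (f (z t)) ^ 2 + Cmod (f' (z t)) ^ 2)%R).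
  set (dE := fun t : R => (2 * Re (Cconj (f (z t)) * (d * f' (z t)))
                           + 2 * Re (Cconj (f' (z t)) * (d * (q (z t) * f (z t)))))%R).
  assert (HE : forall t, is_derive E t (dE t)).
  { intros t.
    assert (Hz := is_derive_Caffine y0 d (RtoC t)).
    apply (is_derive_plus (fun t : R => Cmod (f (z t)) ^ 2) (fun t : R => Cmod (f' (z t)) ^ 2))%R;
      apply (is_derive_Cmod_sqr_real (fun w => _ (z w)));
      apply (is_derive_Ccomp _ z); [apply Hf | exact Hz | apply Hf' | exact Hz]. }
  assert (HdE : forall t, (0 <= t <= 1)%R -> (dE t <= Cmod d * (1 + Q) * E t)%R).
  { intros t Ht; apply Re_energy_deriv_le, HQ.
    eapply Rle_trans; [apply Cmod_triangle|]. rewrite Cmod_mult, Cmod_R, Rabs_pos_eq by lra.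
    assert (Hd := Cmod_ge_0 d). nra. }
  assert (HE1 := gronwall_zero E dE _ (fun t _ => HE t) HdE).
  assert (Hz0 : z 0%R = y0) by (unfold z; ring).
  assert (Hz1 : z 1%R = y) by (unfold z, d; ring).
  unfold E in HE1; rewrite Hz0, Hz1, H0, H0', Cmod_0 in HE1.
  apply Cmod_eq_0. assert (Hy1 := Cmod_ge_0 (f y)). assert (Hy2 := Cmod_ge_0 (f' y)). nra.
Qed.

Lemma ode2_solution_proportional (q f f' g g' : C -> C) (y0 : C) :
  bounded_on_bounded q ->
  ode2_solution q f f' -> ode2_solution q g g' -> g y0 <> 0 ->
  f y0 * g' y0 - f' y0 * g y0 = 0 -> forall y, f y = f y0 / g y0 * g y.
Proof.
  intros Hq Hf Hg Hg0 HW y.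
  assert (H := ode2_solution_unique q _ _ y0 Hq
                 (ode2_solution_sub _ _ _ _ _ Hf (ode2_solution_scal _ _ _ (f y0 / g y0) Hg))).
  apply Ceq_minus, H; [field; exact Hg0|].
  replace (f' y0 - f y0 / g y0 * g' y0) with (- (f y0 * g' y0 - f' y0 * g y0) / g y0)
    by (field; exact Hg0).
  rewrite HW; field; exact Hg0.
Qed.

(** * Limits of complex-valued functions *)

Section CLimits.

Context {T : Type} {F : (T -> Prop) -> Prop} {FF : Filter F}.

Lemma filterlim_C_abs (g : T -> C) (l : C) :
  filterlim g F (@locally C_UniformSpace l) <->
  filterlim g F (@locally (AbsRing_UniformSpace C_AbsRing) l).
Proof. split; intros H P HP; apply H, locally_C, HP. Qed.

Lemma filterlim_Cplus (f g : T -> C) (lf lg : C) :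
  filterlim f F (locally lf) -> filterlim g F (locally lg) ->
  filterlim (fun x => f x + g x) F (locally (lf + lg)).
Proof. intros Hf Hg; exact (filterlim_comp_2 _ _ _ Hf Hg (filterlim_plus lf lg)). Qed.

Lemma filterlim_Copp (f : T -> C) (lf : C) :
  filterlim f F (locally lf) -> filterlim (fun x => - f x) F (locally (- lf)).
Proof. intros Hf; eapply filterlim_comp; [exact Hf | exact (@filterlim_opp C_AbsRing C_NormedModule lf)]. Qed.

Lemma filterlim_Cminus (f g : T -> C) (lf lg : C) :
  filterlim f F (locally lf) -> filterlim g F (locally lg) ->
  filterlim (fun x => f x - g x) F (locally (lf - lg)).
Proof. intros Hf Hg; exact (filterlim_Cplus _ _ _ _ Hf (filterlim_Copp _ _ Hg)). Qed.

Lemma filterlim_Cmult (f g : T -> C) (lf lg : C) :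
  filterlim f F (locally lf) -> filterlim g F (locally lg) ->
  filterlim (fun x => f x * g x) F (locally (lf * lg)).
Proof.
  rewrite !filterlim_C_abs; intros Hf Hg.
  exact (filterlim_comp_2 _ _ _ Hf Hg (@filterlim_mult C_AbsRing lf lg)).
Qed.

Lemma filterlim_Cinv (g : T -> C) (l : C) :
  l <> 0 -> filterlim g F (locally l) -> filterlim (fun x => / g x) F (locally (/ l)).
Proof.
  intros Hl Hg; rewrite filterlim_C_abs in Hg; eapply filterlim_comp; [exact Hg|].
  apply (ex_derive_continuous (V := C_NormedModule) Cinv).
  exists (- / (l * l)); exact (is_derive_Cinv_id l Hl).
Qed.

Lemma filterlim_Cdiv (f g : T -> C) (lf lg : C) :
  lg <> 0 -> filterlim f F (locally lf) -> filterlim g F (locally lg) ->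
  filterlim (fun x => f x / g x) F (locally (lf / lg)).
Proof. intros Hl Hf Hg; exact (filterlim_Cmult _ _ _ _ Hf (filterlim_Cinv _ _ Hl Hg)). Qed.

Lemma filterlim_C_Cmod_lt (g : T -> C) (l : C) (eps : R) :
  (0 < eps)%R -> filterlim g F (locally l) -> F (fun x => (Cmod (g x - l) < eps)%R).
Proof.
  intros Heps Hg.
  apply filterlim_locally with (eps := mkposreal _ (Rdiv_lt_0_compat eps 2 Heps Rlt_0_2)) in Hg.
  eapply filter_imp; [| exact Hg]; intros x Hx.
  apply C_NormedModule_mixin_compat2 in Hx; simpl in Hx.
  assert (sqrt 2 < 2)%R by (rewrite <- (sqrt_square 2) at 2 by lra; apply sqrt_lt_1; lra).
  assert (0 < sqrt 2)%R by (apply sqrt_lt_R0; lra).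
  change (minus (g x) l) with (g x - l) in Hx; nra.
Qed.

Lemma filterlim_C_eventually_neq0 (g : T -> C) (l : C) :
  l <> 0 -> filterlim g F (locally l) -> F (fun x => g x <> 0).
Proof.
  intros Hl Hg; apply Cmod_gt_0 in Hl.
  eapply filter_imp; [| exact (filterlim_C_Cmod_lt g l _ Hl Hg)].
  intros x Hx E; cbv beta in Hx; rewrite E in Hx.
  replace (0 - l) with (- l) in Hx by ring; rewrite Cmod_opp in Hx; lra.
Qed.

End CLimits.

Notation at_infty := (Rbar_locally p_infty).

Lemma filterlim_C_zero_of_le_inv (h : R -> C) (K : R) :
  at_infty (fun x => (Cmod (h x) <= K / x)%R) -> filterlim h at_infty (locally (RtoC 0)).
Proof.
  intros [M HM]; apply (proj2 (filterlim_locally (F := at_infty) h (RtoC 0))); intros [eps Heps]; simpl.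
  exists (Rmax M (Rmax 0 (Rabs K / eps))); intros x Hx.
  assert (H1 := Rmax_l M (Rmax 0 (Rabs K / eps))); assert (H2 := Rmax_r M (Rmax 0 (Rabs K / eps))).
  assert (H3 := Rmax_l 0 (Rabs K / eps)); assert (H4 := Rmax_r 0 (Rabs K / eps)).
  assert (HK : (Rabs K < x * eps)%R) by (apply Rlt_div_l; lra).
  apply C_NormedModule_mixin_compat1; change (minus (h x) (RtoC 0)) with (h x - 0).
  replace (h x - 0) with (h x) by ring.
  eapply Rle_lt_trans; [apply HM; lra|].
  apply Rlt_div_l; [lra|]. assert (H5 := Rle_abs K). lra.
Qed.

Lemma filterlim_RtoC_inv : filterlim (fun x : R => RtoC (/ x)) at_infty (locally (RtoC 0)).
Proof.
  apply (filterlim_C_zero_of_le_inv _ 1); exists 0%R; intros x Hx.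
  rewrite Cmod_R, Rabs_pos_eq; [right; field; lra | left; apply Rinv_0_lt_compat; lra].
Qed.

Lemma filterlim_const_unique (c l : C) :
  filterlim (fun _ : R => c) at_infty (locally l) -> c = l.
Proof.
  intros H; exact (filterlim_locally_unique (V := C_NormedModule) _ _ _ (filterlim_const c) H).
Qed.

Lemma filterlim_div_pos_infty (s : R) : (0 < s)%R ->
  filterlim (fun t : R => t / s)%R at_infty at_infty.
Proof.
  intros Hs P [M HM]; exists (M * s)%R; intros t Ht; apply HM.
  apply Rlt_div_r; [lra | exact Ht].
Qed.

(** * Weber's equation *)

Definition weber (a y : C) : C := y * y / 4 + a.

Lemma is_derive_weber (a y : C) : is_derive (weber a) y (y / 2).
Proof.
  unfold weber; eapply is_derive_Ceq.
  { apply (is_derive_plus (fun w => w * w / 4) (fun _ => a)); [| apply is_derive_const].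
    apply (is_derive_Cmult (fun w => w * w) (fun _ => / 4)); [| apply is_derive_const].
    apply is_derive_Cmult; apply is_derive_Cid. }
  change ((RtoC 1 * y + y * RtoC 1) * / 4 + y * y * zero + zero = y / 2).
  unfold zero; simpl; field.
Qed.

Definition gauss (x : R) : R := exp (- (x * x) / 4).

Lemma gauss_inv (x : R) : gauss x = (/ exp (x * x / 4))%R.
Proof. unfold gauss; rewrite <- exp_Ropp; f_equal; field. Qed.

Lemma gauss_pos (x : R) : (0 < gauss x)%R.
Proof. apply exp_pos. Qed.

Lemma gauss_le_1 (x : R) : (gauss x <= 1)%R.
Proof.
  rewrite gauss_inv, <- Rinv_1; apply Rinv_le_contravar; [lra|].
  eapply Rle_trans; [| apply exp_ineq1_le]; nra.
Qed.

Lemma gauss_le_inv (x : R) : (0 < x)%R -> (gauss x <= 4 / x)%R.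
Proof.
  intros Hx; rewrite gauss_inv; unfold Rdiv; rewrite <- (Rinv_inv 4), <- Rinv_mult.
  apply Rinv_le_contravar; [nra|].
  eapply Rle_trans; [| apply exp_ineq1_le]; nra.
Qed.

Lemma is_derive_gauss (s : R) : is_derive gauss s (- s / 2 * gauss s)%R.
Proof. unfold gauss; auto_derive; [trivial | unfold Rdiv; field]. Qed.

Lemma is_derive_gauss_sqr_div_pow (n : nat) (s : R) : (0 < s)%R ->
  is_derive (fun s => gauss s ^ 2 / s ^ S n)%R s
    (- s * gauss s ^ 2 / s ^ S n - INR (S n) * gauss s ^ 2 / s ^ S (S n))%R.
Proof.
  intros Hs; assert (s ^ n <> 0)%R by (apply pow_nonzero; lra).
  unfold gauss; auto_derive.
  - apply Rmult_integral_contrapositive; split; lra.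
  - unfold Rdiv; simpl; field; split; lra.
Qed.

Lemma gauss_sqr_div_pow_deriv_le (n : nat) (s : R) : (1 <= s)%R ->
  (- s * gauss s ^ 2 / s ^ S n - INR (S n) * gauss s ^ 2 / s ^ S (S n) <= - (gauss s ^ 2 / s ^ n))%R.
Proof.
  intros Hs; assert (Hg := gauss_pos s); assert (HP : (0 < s ^ n)%R) by (apply pow_lt; lra).
  replace (- s * gauss s ^ 2 / s ^ S n)%R with (- (gauss s ^ 2 / s ^ n))%R
    by (simpl; field; split; lra).
  assert (0 <= INR (S n) * gauss s ^ 2 / s ^ S (S n))%R
    by (apply Rdiv_le_0_compat; [apply Rmult_le_pos; [apply pos_INR | nra] | apply pow_lt; lra]).
  lra.
Qed.

Lemma Cmod_le_of_Re_rot_le (z : C) (B : R) :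
  (forall c, Cmod c = 1%R -> (Re (c * z) <= B)%R) -> (Cmod z <= B)%R.
Proof.
  intros H; destruct (Ceq_dec z 0) as [-> | Hz].
  - rewrite Cmod_0; specialize (H 1 Cmod_1); rewrite Cmult_0_r in H; exact H.
  - assert (Hm : (0 < Cmod z)%R) by now apply Cmod_gt_0.
    assert (Hm0 : RtoC (Cmod z) <> 0) by (intros E; apply RtoC_inj in E; lra).
    (* rotate z onto the positive real axis *)
    specialize (H (Cconj z / Cmod z)).
    rewrite Cmod_div, Cmod_conj, Cmod_R, Rabs_pos_eq in H by first [exact Hm0 | lra].
    replace (Cconj z / Cmod z * z) with (RtoC (Cmod z)) in H.
    + rewrite re_RtoC in H; apply H; field; lra.
    + replace (Cconj z / Cmod z * z) with (z * Cconj z / Cmod z) by (field; exact Hm0).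
      rewrite <- Cmod2_conj, RtoC_pow; field; exact Hm0.
Qed.

Section WeberShift.

Variables (a : C) (f f' : C -> C).
Hypothesis Hsol : ode2_solution (weber a) f f'.

Lemma weber_shift_deriv (y : C) :
  is_derive (fun y => f' y + y / 2 * f y) y ((a + 1/2) * f y + y / 2 * (f' y + y / 2 * f y)).
Proof.
  destruct Hsol as [Hf Hf'].
  eapply is_derive_Ceq;
    [exact (is_derive_plus _ _ y _ _ (Hf' y) (is_derive_Cmult _ _ y _ _ (is_derive_Chalf y) (Hf y)))|].
  change (weber a y * f y + (/ 2 * f y + y / 2 * f' y)
          = (a + 1/2) * f y + y / 2 * (f' y + y / 2 * f y)).
  unfold weber; field.
Qed.

Lemma is_derive_gauss_weber_shift (s : R) :
  is_derive (fun s : R => gauss s * Re (f' s + s / 2 * f s))%R s (gauss s * Re ((a + 1/2) * f s))%R.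
Proof.
  eapply is_derive_Req;
    [exact (is_derive_mult _ _ s _ _ (is_derive_gauss s)
              (is_derive_Re_real _ s _ (weber_shift_deriv s)) Rmult_comm)|].
  unfold plus, mult; simpl.
  destruct (f (RtoC s)), (f' (RtoC s)), a; simpl; field.
Qed.

Lemma is_derive_weber_over_gauss (s : R) :
  is_derive (fun s : R => Re (f s) / gauss s)%R s (Re (f' s + s / 2 * f s) / gauss s)%R.
Proof.
  destruct Hsol as [Hf _].
  eapply is_derive_Req;
    [exact (is_derive_div _ _ s _ _ (is_derive_Re_real _ s _ (Hf (RtoC s))) (is_derive_gauss s)
              (Rgt_not_eq _ _ (gauss_pos s)))|].
  assert (Hg := gauss_pos s).
  cbv beta; destruct (f (RtoC s)), (f' (RtoC s)); simpl; field; lra.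
Qed.

Variables (n : nat) (Cb X : R).
Hypotheses (HX : (1 <= X)%R)
  (Hb : forall x : R, (X <= x)%R -> (Cmod (f x) <= Cb / x ^ n * gauss x)%R).

Let K : R := Cmod (a + 1/2) * Cb.
Let psi (s : R) : R := gauss s * Re (f' s + s / 2 * f s).
Let w (s : R) : R := gauss s ^ 2 / s ^ S n.

Lemma weber_shift_bound_nonneg : (0 <= Cb)%R.
Proof.
  assert (H := Rle_trans _ _ _ (Cmod_ge_0 _) (Hb X (Rle_refl X))).
  assert (0 < / X ^ n * gauss X)%R
    by (apply Rmult_lt_0_compat; [apply Rinv_0_lt_compat, pow_lt; lra | apply gauss_pos]).
  unfold Rdiv in H; nra.
Qed.

Lemma weber_shift_psi_deriv_ge (s : R) : (X <= s)%R ->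
  (- (K * (gauss s ^ 2 / s ^ n)) <= gauss s * Re ((a + 1/2) * f s))%R.
Proof.
  intros Hs; assert (Hg := gauss_pos s); assert (HP : (0 < s ^ n)%R) by (apply pow_lt; lra).
  assert (HRe := Rle_trans _ _ _ (Rle_abs (- Re ((a + 1/2) * f s))) (Req_le _ _ (Rabs_Ropp _))).
  assert (Hm := Rle_trans _ _ _ HRe (re_le_Cmod _)); rewrite Cmod_mult in Hm.
  assert (Hfs : (Cmod (a + 1/2) * Cmod (f s) <= K * / s ^ n * gauss s)%R).
  { unfold K; rewrite !Rmult_assoc; apply Rmult_le_compat_l; [apply Cmod_ge_0|].
    rewrite <- Rmult_assoc; apply Hb; lra. }
  replace (K * (gauss s ^ 2 / s ^ n))%R with (gauss s * (K * / s ^ n * gauss s))%R by (field; lra).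
  assert (gauss s * (Cmod (a + 1/2) * Cmod (f s)) <= gauss s * (K * / s ^ n * gauss s))%R
    by (apply Rmult_le_compat_l; lra).
  nra.
Qed.

Lemma weber_shift_comparison (x y : R) : (X <= x <= y)%R -> (psi x - K * w x <= psi y - K * w y)%R.
Proof.
  intros Hxy; assert (HK : (0 <= K)%R) by exact (Rmult_le_pos _ _ (Cmod_ge_0 _) weber_shift_bound_nonneg).
  apply (le_of_is_derive_nonneg (fun s => psi s - K * w s)%R
    (fun s => gauss s * Re ((a + 1/2) * f s)
              - K * (- s * gauss s ^ 2 / s ^ S n - INR (S n) * gauss s ^ 2 / s ^ S (S n)))%R);
    [lra | intros s Hs ..].
  - apply (is_derive_minus psi (fun s => K * w s)%R); [apply is_derive_gauss_weber_shift|].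
    apply (is_derive_scal w), is_derive_gauss_sqr_div_pow; lra.
  - assert (Hw := gauss_sqr_div_pow_deriv_le n s ltac:(lra)).
    assert (H := weber_shift_psi_deriv_ge s ltac:(lra)).
    assert (K * (- s * gauss s ^ 2 / s ^ S n - INR (S n) * gauss s ^ 2 / s ^ S (S n))
            <= K * - (gauss s ^ 2 / s ^ n))%R by (apply Rmult_le_compat_l; lra).
    lra.
Qed.

(* If [psi] ever exceeded the comparison function [K * w], the gap would persist, and
   [Re f / gauss], whose derivative is [psi / gauss^2], would grow linearly, contradicting
   the decay of [f]. *)
Lemma weber_shift_Re_le (x : R) : (X <= x)%R ->
  (gauss x * Re (f' x + x / 2 * f x) <= Cmod (a + 1/2) * Cb * (gauss x ^ 2 / x ^ S n))%R.
Proof.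
  intros Hx; fold (psi x) K (w x); apply Rnot_lt_le; intros Hlt.
  destruct (unbounded_of_is_derive_ge (fun s : R => Re (f s) / gauss s)%R
              (fun s : R => Re (f' s + s / 2 * f s) / gauss s)%R x (psi x - K * w x) Cb)
    as [y [Hy Hbig]]; [lra | intros y _; apply is_derive_weber_over_gauss | |].
  - intros y Hy.
    assert (Hg := gauss_pos y); assert (Hg1 := gauss_le_1 y).
    assert (Hw : (0 <= w y)%R) by (apply Rdiv_le_0_compat; [nra | apply pow_lt; lra]).
    assert (Hpsi : (psi x - K * w x <= psi y)%R)
      by (assert (HK : (0 <= K)%R) by exact (Rmult_le_pos _ _ (Cmod_ge_0 _) weber_shift_bound_nonneg);
          specialize (weber_shift_comparison x y ltac:(lra)); nra).
    replace (Re (f' y + y / 2 * f y) / gauss y)%R with (psi y / (gauss y * gauss y))%R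
      by (unfold psi; field; lra).
    apply (Rle_trans _ (psi y)); [exact Hpsi|].
    assert (Hgg : (gauss y * gauss y > 0)%R) by nra.
    apply (Rle_div_r _ _ _ Hgg). assert (0 <= psi y)%R by lra.
    assert (gauss y * gauss y <= 1)%R by nra. nra.
  - assert (Hg := gauss_pos y); assert (HP := pow_R1_Rle y n ltac:(lra)).
    assert (Hf := Rle_trans _ _ _ (re_le_Cmod (f y)) (Hb y ltac:(lra))).
    assert (HCb := weber_shift_bound_nonneg).
    apply (Rlt_irrefl Cb), (Rlt_le_trans _ _ _ Hbig).
    apply (Rle_div_l _ _ _ Hg), (Rle_trans _ _ _ (Rle_abs _)), (Rle_trans _ _ _ Hf).
    apply Rmult_le_compat_r; [lra|]. unfold Rdiv.
    rewrite <- (Rmult_1_r Cb) at 2; apply Rmult_le_compat_l; [lra|].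
    rewrite <- Rinv_1; apply Rinv_le_contravar; lra.
Qed.

End WeberShift.

Lemma weber_shift_bound (a : C) (f f' : C -> C) (n : nat) (Cb : R) :
  ode2_solution (weber a) f f' ->
  at_infty (fun x : R => (Cmod (f x) <= Cb / x ^ n * gauss x)%R) ->
  at_infty (fun x : R => (Cmod (f' x + x / 2 * f x) <= Cmod (a + 1/2) * Cb / x ^ S n * gauss x)%R).
Proof.
  intros Hsol [M HM]; exists (Rmax 1 (M + 1)); intros x Hx.
  assert (HX1 := Rmax_l 1 (M + 1)); assert (HXM := Rmax_r 1 (M + 1)).
  apply Cmod_le_of_Re_rot_le; intros c Hc.
  assert (H := weber_shift_Re_le a _ _ (ode2_solution_scal _ _ _ c Hsol) n Cb _ HX1).
  specialize (H ltac:(intros y Hy; cbv beta; rewrite Cmod_mult, Hc, Rmult_1_l; apply HM; lra) x ltac:(lra)).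
  cbv beta in H; replace (c * f' x + x / 2 * (c * f x)) with (c * (f' x + x / 2 * f x)) in H by ring.
  assert (Hg := gauss_pos x).
  apply (Rmult_le_reg_l (gauss x)); [exact Hg|].
  eapply Rle_trans; [exact H | right].
  assert (x ^ n <> 0)%R by (apply pow_nonzero; lra). simpl; field; lra.
Qed.

Definition weber_lower (f f' : C -> C) (y : C) : C := y / 2 * f y - f' y.

Definition weber_lower' (a : C) (f f' : C -> C) (y : C) : C :=
  f y / 2 + y / 2 * f' y - weber a y * f y.

Lemma weber_lower_solution (a : C) (f f' : C -> C) :
  ode2_solution (weber a) f f' ->
  ode2_solution (weber (a - 1)) (weber_lower f f') (weber_lower' a f f').
Proof.
  intros [Hf Hf']; split; intros y; unfold weber_lower, weber_lower'.
  - eapply is_derive_Ceq;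
      [exact (is_derive_minus _ _ y _ _ (is_derive_Cmult _ _ y _ _ (is_derive_Chalf y) (Hf y)) (Hf' y))|].
    change (/ 2 * f y + y / 2 * f' y - weber a y * f y = f y / 2 + y / 2 * f' y - weber a y * f y).
    field.
  - eapply is_derive_Ceq.
    { apply (is_derive_minus (fun y => f y / 2 + y / 2 * f' y) (fun y => weber a y * f y));
        [apply (is_derive_plus (fun y => f y / 2) (fun y => y / 2 * f' y))|].
      - apply (is_derive_Cmult f (fun _ => / 2)); [apply Hf | apply is_derive_const].
      - apply (is_derive_Cmult (fun y => y / 2)); [apply is_derive_Chalf | apply Hf'].
      - apply (is_derive_Cmult (weber a)); [apply is_derive_weber | apply Hf]. }
    change (f' y * / 2 + f y * zero + (/ 2 * f' y + y / 2 * (weber a y * f y))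
            - (y / 2 * f y + weber a y * f' y) = weber (a - 1) y * (y / 2 * f y - f' y)).
    unfold zero, weber; simpl; field.
Qed.

Lemma weber_bounded_on_bounded (b : C) : bounded_on_bounded (weber b).
Proof.
  intros r; exists (r * r / 4 + Cmod b)%R; intros y Hy; unfold weber.
  eapply Rle_trans; [apply Cmod_triangle|]; apply Rplus_le_compat_r.
  rewrite Cmod_div, Cmod_mult by (intros E; apply RtoC_inj in E; lra).
  replace (Cmod 4) with 4%R by (rewrite <- (Rabs_pos_eq 4) at 1 by lra; symmetry; apply Cmod_R).
  assert (H0 := Cmod_ge_0 y); apply Rmult_le_compat_r; [lra | nra].
Qed.

Definition weber_ratio (f f' : C -> C) (y : C) : C := f y / weber_lower f f' y.

Lemma weber_ratio_riccati (a : C) (f f' : C -> C) (y : C) :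
  ode2_solution (weber a) f f' -> weber_lower f f' y <> 0 ->
  is_derive (weber_ratio f f') y
    (y * weber_ratio f f' y - 1 - (1/2 - a) * weber_ratio f f' y * weber_ratio f f' y).
Proof.
  intros Hsol HL; destruct (weber_lower_solution a f f' Hsol) as [HL' _].
  eapply is_derive_Ceq;
    [exact (is_derive_Cmult _ _ y _ _ (proj1 Hsol y) (is_derive_Cinv _ y _ (HL' y) HL))|].
  revert HL; unfold weber_ratio, weber_lower, weber_lower', weber; intros HL.
  assert (HL2 : y * f y - f' y * 2 <> 0)
    by (intros E; apply HL; replace (y / 2 * f y - f' y) with ((y * f y - f' y * 2) / 2) by field;
        rewrite E; field).
  field; exact HL2.
Qed.

(** * Parabolic cylinder functions *)

Lemma Cmod_cexp (z : C) : Cmod (cexp z) = exp (Re z).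
Proof.
  destruct z as [x y]; unfold cexp, Cmod; simpl.
  assert (H := sin2_cos2 y); unfold Rsqr in H.
  match goal with |- sqrt ?e = _ => replace e with (exp x ^ 2)%R end.
  - apply sqrt_pow2; left; apply exp_pos.
  - transitivity (exp x ^ 2 * (sin y * sin y + cos y * cos y))%R; [rewrite H |]; ring.
Qed.

Lemma cexp_plus (z w : C) : cexp (z + w) = cexp z * cexp w.
Proof.
  unfold cexp; destruct z as [z1 z2], w as [w1 w2]; simpl.
  rewrite exp_plus, cos_plus, sin_plus; unfold Cmult; simpl; f_equal; ring.
Qed.

Lemma cexp_ln (x : R) : (0 < x)%R -> cexp (RtoC (ln x)) = RtoC x.
Proof.
  intros Hx; unfold cexp, RtoC; simpl; rewrite cos_0, sin_0, exp_ln by exact Hx; f_equal; ring.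
Qed.

Lemma rpowC_succ (x : R) (s : C) : (0 < x)%R -> rpowC x (s + 1) = RtoC x * rpowC x s.
Proof.
  intros Hx; unfold rpowC.
  replace ((s + 1) * RtoC (ln x)) with (s * RtoC (ln x) + RtoC (ln x)) by ring.
  rewrite cexp_plus, cexp_ln by exact Hx; ring.
Qed.

Definition pcf_lead (a : C) (x : R) : C := rpowC x (- a - 1/2) * RtoC (gauss x).

Lemma pcf_lead_pred (a : C) (x : R) : (0 < x)%R -> pcf_lead (a - 1) x = RtoC x * pcf_lead a x.
Proof.
  intros Hx; unfold pcf_lead.
  replace (- (a - 1) - 1/2) with ((- a - 1/2) + 1) by ring.
  rewrite rpowC_succ by exact Hx; ring.
Qed.

Lemma pcf_lead_neq0 (b : C) (x : R) : pcf_lead b x <> 0.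
Proof.
  unfold pcf_lead, rpowC; intros E; apply (f_equal Cmod) in E.
  rewrite Cmod_0, Cmod_mult, Cmod_cexp, Cmod_R in E.
  assert (0 < exp (Re ((- b - 1/2) * RtoC (ln x))))%R by apply exp_pos.
  assert (0 < Rabs (gauss x))%R by (apply Rabs_pos_lt, Rgt_not_eq, gauss_pos). nra.
Qed.

Lemma Cmod_pcf_lead (a : C) (n : nat) (x : R) :
  Re a = (INR n - 1/2)%R -> (0 < x)%R -> Cmod (pcf_lead a x) = (gauss x / x ^ n)%R.
Proof.
  intros Ha Hx; unfold pcf_lead, rpowC.
  rewrite Cmod_mult, Cmod_cexp, Cmod_R, Rabs_pos_eq by (left; apply gauss_pos).
  replace (Re ((- a - 1/2) * RtoC (ln x))) with (- ln (x ^ n))%R.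
  - rewrite exp_Ropp, exp_ln by (apply pow_lt; exact Hx); unfold Rdiv; ring.
  - rewrite ln_pow by exact Hx; destruct a as [a1 a2]; simpl in *; rewrite Ha; field.
Qed.

Lemma pcf_bound (b : C) (f : C -> C) (n : nat) :
  Re b = (INR n - 1/2)%R ->
  filterlim (fun x : R => f x / pcf_lead b x) at_infty (locally (RtoC 1)) ->
  at_infty (fun x : R => (Cmod (f x) <= 2 / x ^ n * gauss x)%R).
Proof.
  intros Hb Hf.
  assert (H1 := filterlim_C_Cmod_lt _ _ 1 Rlt_0_1 Hf).
  apply (filter_imp (fun x => 0 < x /\ Cmod (f x / pcf_lead b x - 1) < 1)%R);
    [| apply filter_and; [exists 0%R; tauto | exact H1]].
  intros x [Hx Hlt].
  assert (Hl : Cmod (pcf_lead b x) = (gauss x / x ^ n)%R) by now apply Cmod_pcf_lead.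
  assert (Hl0 : pcf_lead b x <> 0).
  { intros E; rewrite E, Cmod_0 in Hl. assert (Hg := gauss_pos x). assert (Hp := pow_lt x n Hx).
    assert (0 < gauss x / x ^ n)%R by (apply Rdiv_lt_0_compat; lra). lra. }
  replace (f x) with ((f x / pcf_lead b x - 1 + 1) * pcf_lead b x) by (field; exact Hl0).
  rewrite Cmod_mult, Hl.
  assert (Htri := Cmod_triangle (f x / pcf_lead b x - 1) 1); rewrite Cmod_1 in Htri.
  assert (0 <= gauss x / x ^ n)%R by (apply Rdiv_le_0_compat; [left; apply gauss_pos | apply pow_lt; lra]).
  replace (2 / x ^ n * gauss x)%R with (2 * (gauss x / x ^ n))%R
    by (field; apply pow_nonzero; lra).
  apply Rmult_le_compat_r; lra.
Qed.

Lemma pcf_shift_small (b : C) (f f' : C -> C) (n : nat) :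
  Re b = (INR n - 1/2)%R -> ode2_solution (weber b) f f' ->
  filterlim (fun x : R => f x / pcf_lead b x) at_infty (locally (RtoC 1)) ->
  filterlim (fun x : R => (f' x + x / 2 * f x) / (RtoC (x ^ n) * pcf_lead b x))
    at_infty (locally (RtoC 0)).
Proof.
  intros Hb Hsol Hf.
  assert (Hbd := weber_shift_bound b f f' n 2 Hsol (pcf_bound b f n Hb Hf)).
  apply (filterlim_C_zero_of_le_inv _ (Cmod (b + 1/2) * 2)).
  apply (filter_imp (fun x => 1 < x /\
           Cmod (f' x + x / 2 * f x) <= Cmod (b + 1/2) * 2 / x ^ S n * gauss x)%R);
    [| apply filter_and; [exists 1%R; tauto | exact Hbd]].
  intros x [Hx Hle].
  assert (Hg := gauss_pos x); assert (Hp := pow_lt x n ltac:(lra)).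
  assert (HK := Cmod_ge_0 (b + 1/2)).
  assert (Hl := Cmod_pcf_lead b n x Hb ltac:(lra)).
  assert (Hden : Cmod (RtoC (x ^ n) * pcf_lead b x) = gauss x).
  { rewrite Cmod_mult, Cmod_R, Rabs_pos_eq, Hl by lra; field; lra. }
  assert (Hden0 : RtoC (x ^ n) * pcf_lead b x <> 0) by (intros E; rewrite E, Cmod_0 in Hden; lra).
  rewrite Cmod_div, Hden by exact Hden0.
  apply (Rle_div_l _ _ _ Hg), (Rle_trans _ _ _ Hle).
  apply Rmult_le_compat_r; [lra|]. unfold Rdiv; apply Rmult_le_compat_l; [lra|].
  apply Rinv_le_contravar; [lra|]. simpl. assert (1 <= x ^ n)%R by (apply pow_R1_Rle; lra). nra.
Qed.

Section PcfLowering.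

Variables (a : C) (U U' V V' : C -> C).
Hypotheses (Ha : Re a = (1/2)%R)
  (HU : ode2_solution (weber a) U U') (HV : ode2_solution (weber (a - 1)) V V')
  (LU : filterlim (fun x : R => U x / pcf_lead a x) at_infty (locally (RtoC 1)))
  (LV : filterlim (fun x : R => V x / pcf_lead (a - 1) x) at_infty (locally (RtoC 1))).

Let F (y : C) : C := weber_lower U U' y - V y.

Let F' (y : C) : C := weber_lower' a U U' y - V' y.

Let W (y : C) : C := F y * V' y - F' y * V y.

Lemma pcf_lowering_solution : ode2_solution (weber (a - 1)) F F'.
Proof. exact (ode2_solution_sub _ _ _ _ _ (weber_lower_solution a U U' HU) HV). Qed.

Let p1 (x : R) : C := U x / pcf_lead a x.

Let p2 (x : R) : C := V x / pcf_lead (a - 1) x.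

Let v1 (x : R) : C := (U' x + x / 2 * U x) / (RtoC (x ^ 1) * pcf_lead a x).

Let v2 (x : R) : C := (V' x + x / 2 * V x) / (RtoC (x ^ 0) * pcf_lead (a - 1) x).

(* The growing parts cancel: W is [lead^2] times a quantity that tends to 0. *)
Lemma pcf_lowering_wronskian_eq (x : R) : (0 < x)%R ->
  W x = pcf_lead (a - 1) x * pcf_lead (a - 1) x
        * ((p1 x - v1 x) * v2 x + (a - 1/2) * p1 x * p2 x * RtoC (/ x)).
Proof.
  intros Hx; unfold W, F, F', p1, p2, v1, v2, weber_lower, weber_lower', weber.
  assert (Hl := pcf_lead_neq0 a x); assert (Hx0 : RtoC x <> 0) by (intros E; apply RtoC_inj in E; lra).
  rewrite (pcf_lead_pred a x Hx), RtoC_inv by lra; simpl; rewrite Rmult_1_r.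
  field; split; assumption.
Qed.

Lemma pcf_lowering_wronskian_lim : filterlim (fun x : R => W x) at_infty (locally (RtoC 0)).
Proof.
  assert (Lv1 := pcf_shift_small a U U' 1 ltac:(rewrite Ha; simpl; lra) HU LU).
  assert (Ha' : Re (a - 1) = (INR 0 - 1/2)%R) by (unfold Cminus; rewrite re_plus, re_opp, Ha; simpl; lra).
  assert (Lv2 := pcf_shift_small (a - 1) V V' 0 Ha' HV LV).
  assert (Llead : filterlim (pcf_lead (a - 1)) at_infty (locally (RtoC 0))).
  { apply (filterlim_C_zero_of_le_inv _ 4); exists 0%R; intros x Hx.
    rewrite (Cmod_pcf_lead _ 0 x Ha' Hx).
    simpl; rewrite Rdiv_1_r; now apply gauss_le_inv. }
  apply (filterlim_ext_loc (fun x => pcf_lead (a - 1) x * pcf_lead (a - 1) x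
        * ((p1 x - v1 x) * v2 x + (a - 1/2) * p1 x * p2 x * RtoC (/ x)))).
  { exists 0%R; intros x Hx; symmetry; now apply pcf_lowering_wronskian_eq. }
  replace (RtoC 0) with (0 * 0 * ((1 - 0) * 0 + (a - 1/2) * 1 * 1 * 0)) by ring.
  apply filterlim_Cmult; [exact (filterlim_Cmult _ _ _ _ Llead Llead)|].
  apply filterlim_Cplus.
  - exact (filterlim_Cmult _ _ _ _ (filterlim_Cminus _ _ _ _ LU Lv1) Lv2).
  - apply (filterlim_Cmult _ _ _ _ (filterlim_Cmult _ _ _ _
             (filterlim_Cmult _ _ _ _ (filterlim_const (a - 1/2)) LU) LV) filterlim_RtoC_inv).
Qed.

Lemma pcf_lowering_wronskian_zero (x : R) : W x = 0.
Proof.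
  assert (HW := ode2_wronskian_deriv _ _ _ _ _ pcf_lowering_solution HV).
  apply filterlim_const_unique.
  eapply filterlim_ext; [intros t; exact (const_real_of_is_derive_C_zero W HW t x) |].
  exact pcf_lowering_wronskian_lim.
Qed.

Lemma pcf_lowering_V_neq0 : at_infty (fun x : R => (0 < x)%R /\ V x <> 0).
Proof.
  apply filter_and; [exists 0%R; tauto|].
  eapply filter_imp; [| exact (filterlim_C_eventually_neq0 _ _ C1_nz LV)].
  intros x Hx E; apply Hx; unfold Cdiv; rewrite E; apply Cmult_0_l.
Qed.

Lemma pcf_lowering_eq (y : C) : V y = weber_lower U U' y.
Proof.
  destruct pcf_lowering_V_neq0 as [M HM].
  assert (Hx0 := HM (M + 1)%R ltac:(lra)).
  assert (Hprop := ode2_solution_proportional _ _ _ _ _ (M + 1)%R (weber_bounded_on_bounded (a - 1))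
                     pcf_lowering_solution HV (proj2 Hx0) (pcf_lowering_wronskian_zero _)).
  set (l := F (M + 1)%R / V (M + 1)%R) in Hprop.
  assert (Hl : l = 0).
  { apply filterlim_const_unique.
    apply (filterlim_ext_loc (fun x : R => (p1 x - v1 x - p2 x) / p2 x)).
    - exists M; intros x Hx; destruct (HM x Hx) as [Hxpos HVx].
      assert (Hxc : RtoC x <> 0) by (intros E; apply RtoC_inj in E; lra).
      assert (Hl1 := pcf_lead_neq0 a x).
      replace l with (F x / V x) by (rewrite (Hprop x); field; exact HVx).
      unfold F, p1, p2, v1, weber_lower; rewrite (pcf_lead_pred a x Hxpos); simpl; rewrite Rmult_1_r.
      field; repeat split; assumption.
    - replace (RtoC 0) with ((1 - 0 - 1) / 1) by field.
      apply filterlim_Cdiv; [exact C1_nz | | exact LV].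
      apply filterlim_Cminus; [apply filterlim_Cminus|]; [exact LU | | exact LV].
      exact (pcf_shift_small a U U' 1 ltac:(rewrite Ha; simpl; lra) HU LU). }
  specialize (Hprop y); rewrite Hl, Cmult_0_l in Hprop.
  symmetry; apply Ceq_minus; exact Hprop.
Qed.

End PcfLowering.

Lemma pcf_lowering (a : C) (U V : C -> C) :
  Re a = (1/2)%R -> is_PCF_U a U -> is_PCF_U (a - 1) V ->
  exists U', ode2_solution (weber a) U U' /\ forall y, V y = weber_lower U U' y.
Proof.
  intros Ha [U' [HU1 [HU2 LU]]] [V' [HV1 [HV2 LV]]].
  exists U'; split; [split; assumption|].
  exact (pcf_lowering_eq a U U' V V' Ha (conj HU1 HU2) (conj HV1 HV2) LU LV).
Qed.

(** * The inner solution *)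

Lemma is_derive_riccati_rescale (r : C -> C) (b k c xi : C) : k <> 0 ->
  is_derive r (c * xi) (c * xi * r (c * xi) - 1 - b * r (c * xi) * r (c * xi)) ->
  is_derive (fun w => k * r (c * w)) xi
    (c * c * xi * (k * r (c * xi)) - k * c - b * c / k * (k * r (c * xi)) * (k * r (c * xi))).
Proof.
  intros Hk Hr.
  eapply is_derive_Ceq; [apply is_derive_Cscal, (is_derive_Ccomp r (fun w => c * w)); [exact Hr|]|].
  - eapply is_derive_ext; [| exact (is_derive_Caffine 0 c xi)]; intros w; change (0 + c * w = c * w); ring.
  - field; exact Hk.
Qed.

Lemma Ci_sqr : Ci * Ci = - (1).
Proof. apply injective_projections; simpl; ring. Qed.

Lemma riccati_constants (i S r xi : C) : i * i = - (1) -> S <> 0 ->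
  i / S * (i / S) * xi * (/ (2 * S) * r) - / (2 * S) * (i / S)
  - (1/2 - (1/2 - i / (4 * (S * S / 2)))) * (i / S) / / (2 * S) * (/ (2 * S) * r) * (/ (2 * S) * r)
  = (/ (2 * S) * r * (/ (2 * S) * r) - xi * (/ (2 * S) * r) - i / 2) / (2 * (S * S / 2)).
Proof.
  intros Hi HS.
  assert (Hi2 : i ^ 2 = - (1)) by (rewrite <- Hi; ring).
  field_simplify_eq; [rewrite Hi2; ring | exact HS].
Qed.

Lemma sqrt_RtoC_sqr (m : R) : (0 <= m)%R -> RtoC (sqrt m) * RtoC (sqrt m) = RtoC m.
Proof. intros Hm; rewrite <- RtoC_mult, sqrt_sqrt by exact Hm; reflexivity. Qed.

Lemma Phi0_riccati (mu : R) (U1 U1' U2 : C -> C) (xi : C) :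
  (0 < mu)%R -> ode2_solution (weber (1/2 - Ci / (4 * RtoC mu))) U1 U1' ->
  (forall y, U2 y = weber_lower U1 U1' y) -> Phi0_den mu U2 xi <> 0 ->
  is_derive (Phi0 mu U1 U2) xi
    ((Phi0 mu U1 U2 xi * Phi0 mu U1 U2 xi - xi * Phi0 mu U1 U2 xi - Ci / 2) / (2 * RtoC mu)).
Proof.
  intros Hmu Hsol HU2 Hden; unfold Phi0_den in Hden.
  set (S := RtoC (sqrt (2 * mu))) in *.
  assert (HS : RtoC mu = S * S / 2) by (unfold S; rewrite sqrt_RtoC_sqr by lra; rewrite RtoC_mult; field).
  assert (HS0 : S <> 0).
  { assert (0 < sqrt (2 * mu))%R by (apply sqrt_lt_R0; lra). intros E; apply RtoC_inj in E; lra. }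
  assert (Hphi : forall w, Phi0 mu U1 U2 w = / (2 * S) * weber_ratio U1 U1' (Ci / S * w)).
  { intros w; unfold Phi0, weber_ratio; fold S; rewrite HU2.
    replace (Ci * w / S) with (Ci / S * w) by (field; exact HS0); reflexivity. }
  eapply is_derive_ext; [intros w; symmetry; apply Hphi|]; rewrite !Hphi.
  eapply is_derive_Ceq; [apply is_derive_riccati_rescale
                           with (b := 1/2 - (1/2 - Ci / (4 * RtoC mu))) |].
  - intros E; assert (H1 : 2 * S * / (2 * S) = 1) by (field; exact HS0).
    rewrite E, Cmult_0_r in H1; exact (C1_nz (eq_sym H1)).
  - apply (weber_ratio_riccati _ _ _ _ Hsol).
    rewrite <- HU2; replace (Ci / S * xi) with (Ci * xi / S) by (field; exact HS0); exact Hden.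
  - rewrite HS; apply riccati_constants; [exact Ci_sqr | exact HS0].
Qed.

Lemma is_derive_riccati_rhs (m : C) (P : C -> C) (xi p' : C) : m <> 0 -> is_derive P xi p' ->
  is_derive (fun w => (P w * P w - w * P w - Ci / 2) / (2 * m)) xi
    ((2 * P xi * p' - P xi - xi * p') / (2 * m)).
Proof.
  intros Hm HP.
  eapply is_derive_Ceq.
  { apply (is_derive_Cmult (fun w => P w * P w - w * P w - Ci / 2) (fun _ => / (2 * m)));
      [| apply is_derive_const].
    apply (is_derive_minus (fun w => P w * P w - w * P w) (fun _ => Ci / 2)); [| apply is_derive_const].
    apply (is_derive_minus (fun w => P w * P w) (fun w => w * P w));
      apply is_derive_Cmult; first [exact HP | apply is_derive_Cid]. }
  change ((p' * P xi + P xi * p' - (RtoC 1 * P xi + xi * p') - zero) * / (2 * m)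
          + (P xi * P xi - xi * P xi - Ci / 2) * zero = (2 * P xi * p' - P xi - xi * p') / (2 * m)).
  unfold zero; simpl; field; exact Hm.
Qed.

Lemma Phi0_asymptotic (mu : R) (a : C) (U1 U2 : C -> C) : (0 < mu)%R ->
  filterlim (fun x : R => U1 x / pcf_lead a x) at_infty (locally (RtoC 1)) ->
  filterlim (fun x : R => U2 x / pcf_lead (a - 1) x) at_infty (locally (RtoC 1)) ->
  filterlim (fun t : R => Phi0 mu U1 U2 (- (Ci * RtoC t)) / (- Ci / (2 * (- (Ci * RtoC t)))))
    at_infty (locally (RtoC 1)).
Proof.
  intros Hmu L1 L2.
  set (s := sqrt (2 * mu)); assert (Hs : (0 < s)%R) by (apply sqrt_lt_R0; lra).
  assert (Lq := filterlim_Cdiv _ _ _ _ C1_nz L1 L2).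
  replace (RtoC 1 / RtoC 1) with (RtoC 1) in Lq by field.
  apply (filterlim_ext_loc (fun t : R => U1 (t / s)%R / pcf_lead a (t / s)
                                        / (U2 (t / s)%R / pcf_lead (a - 1) (t / s)))).
  2: exact (filterlim_comp _ _ _ _ _ _ _ _ (filterlim_div_pos_infty s Hs) Lq).
  apply (filter_imp (fun t : R => (0 < t)%R /\ U2 (t / s)%R / pcf_lead (a - 1) (t / s) <> 0)).
  2: { apply filter_and; [exists 0%R; tauto|].
       exact (filterlim_div_pos_infty s Hs _ (filterlim_C_eventually_neq0 _ _ C1_nz L2)). }
  intros t [Ht Hne].
  assert (Hy : (0 < t / s)%R) by (apply Rdiv_lt_0_compat; lra).
  assert (Harg : Ci * - (Ci * RtoC t) / RtoC s = RtoC (t / s)).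
  { apply injective_projections; simpl; field; lra. }
  unfold Phi0; fold s; rewrite Harg, (pcf_lead_pred a _ Hy) in *.
  assert (Hl := pcf_lead_neq0 a (t / s)).
  assert (HU2 : U2 (t / s)%R <> 0) by (intros E; apply Hne; unfold Cdiv; rewrite E; apply Cmult_0_l).
  assert (Ht0 : RtoC t <> 0) by (intros E; apply RtoC_inj in E; lra).
  assert (Hs0 : RtoC s <> 0) by (intros E; apply RtoC_inj in E; lra).
  rewrite RtoC_div in * by lra.
  field; repeat split; auto using Ci_nz.
Qed.

Theorem mainTheorem1 (mu : R) (U1 U2 : C -> C) :
  (0 < mu)%R ->
  is_PCF_U (1/2 - Ci / (4 * RtoC mu)) U1 ->
  is_PCF_U (- (1/2) - Ci / (4 * RtoC mu)) U2 ->
  (exists dPhi : C -> C,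
     forall xi : C, Phi0_den mu U2 xi <> 0 ->
       is_derive (Phi0 mu U1 U2) xi (dPhi xi) /\
       Phi0 mu U1 U2 xi * Phi0 mu U1 U2 xi - xi * Phi0 mu U1 U2 xi
         = 2 * RtoC mu * dPhi xi + Ci / 2 /\
       (exists d2 : C, is_derive dPhi xi d2 /\
          - (1/2) * Phi0 mu U1 U2 xi - (1/2) * xi * dPhi xi
            + Phi0 mu U1 U2 xi * dPhi xi = RtoC mu * d2)) /\
  filterlim
    (fun t : R => Phi0 mu U1 U2 (- (Ci * RtoC t)) / (- Ci / (2 * (- (Ci * RtoC t)))))
    (Rbar_locally p_infty) (locally (RtoC 1)).
Proof.
  intros Hmu P1 P2.
  set (a := 1/2 - Ci / (4 * RtoC mu)) in *.
  assert (Hmu0 : RtoC mu <> 0) by (intros E; apply RtoC_inj in E; lra).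
  replace (- (1/2) - Ci / (4 * RtoC mu)) with (a - 1) in P2 by (unfold a; field; exact Hmu0).
  assert (Ha : Re a = (1/2)%R) by (unfold a; simpl; field; lra).
  destruct (pcf_lowering a U1 U2 Ha P1 P2) as [U1' [Hsol Hlow]].
  set (Phi := Phi0 mu U1 U2).
  set (dPhi := fun xi => (Phi xi * Phi xi - xi * Phi xi - Ci / 2) / (2 * RtoC mu)).
  split.
  - exists dPhi; intros xi Hden.
    assert (HD := Phi0_riccati mu U1 U1' U2 xi Hmu Hsol Hlow Hden); fold Phi in HD.
    split; [exact HD|]; split; [unfold dPhi; field; exact Hmu0|].
    eexists; split; [exact (is_derive_riccati_rhs _ Phi xi _ Hmu0 HD)|].
    unfold dPhi; field; exact Hmu0.
  - destruct P1 as (_ & _ & _ & L1), P2 as (_ & _ & _ & L2).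
    exact (Phi0_asymptotic mu a U1 U2 Hmu L1 L2).
Qed.
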